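(* Let $S\subseteq\mathbb{R}^d$ be a finite set, and suppose every pair $\{p_1,p_2\}$ of distinct points of $S$ is coloured red or blue in such a way that the distance between the points of any blue pair is strictly more than $3$ times the distance between the points of any red pair. Let $B$ be a largest blue clique in $S$ (a subset all of whose pairs are blue). Then $S$ can be partitioned into $|B|$ vertex-disjoint red cliques $R_1,\dots,R_{|B|}$ (subsets all of whose pairs are red) such that (1) each $R_i$ shares exactly one point with $B$, and (2) if $p\in R_i$, $q\in R_j$ with $i\ne j$, then $\{p,q\}$ is blue. *)

From mathcomp Require Import all_boot all_order all_algebra.
Set Implicit Arguments. Unset Strict Implicit. Unset Printing Implicit Defensive.
Import Order.TTheory GRing.Theory Num.Theory.
Local Open Scope ring_scope.

Definition edist (R : rcfType) (d : nat) (p q : 'rV[R]_d) : R :=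
  Num.sqrt (\sum_(i < d) (p 0 i - q 0 i) ^+ 2).

(* A colouring of pairs of points of T: col x y = true means the pair {x,y}
   is blue, false means red.  Cliques are subsets all of whose pairs of
   distinct elements have the given colour. *)
Definition blue_clique (T : finType) (col : T -> T -> bool) (A : {set T}) :=
  forall x y, x \in A -> y \in A -> x != y -> col x y.

Definition red_clique (T : finType) (col : T -> T -> bool) (A : {set T}) :=
  forall x y, x \in A -> y \in A -> x != y -> ~~ col x y.

Definition largest_blue_clique (T : finType) (col : T -> T -> bool) (B : {set T}) :=
  blue_clique col B /\ forall A : {set T}, blue_clique col A -> (#|A| <= #|B|)%N.

From mathcomp Require Import all_boot all_order all_algebra.
From mathcomp Require Import ring lra.
Set Implicit Arguments. Unset Strict Implicit.
Import Order.TTheory GRing.Theory Num.Theory.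
Local Open Scope ring_scope.

(* Being red or equal is an equivalence relation: if x, y, z were distinct with
   xy and yz red but xz blue, then |xz| > 3 |xy| and |xz| > 3 |yz|, whereas
   |xz| <= 2 max(|xy|, |yz|) already follows from (a + b)^2 <= 2 a^2 + 2 b^2.
   A blue clique meets each equivalence class at most once, and a largest one
   meets every class, since otherwise a point of a missed class could be added
   to it.  The classes, indexed by the points of B, form the partition. *)

Section EuclideanDistance.

Variables (R : rcfType) (d : nat).
Implicit Types x y z : 'rV[R]_d.

Lemma edist_ge0 x y : 0 <= edist x y.
Proof. exact: sqrtr_ge0. Qed.

Lemma sqr_edist x y : edist x y ^+ 2 = \sum_(i < d) (x 0 i - y 0 i) ^+ 2.
Proof. by rewrite sqr_sqrtr // sumr_ge0 // => i _; rewrite sqr_ge0. Qed.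

Lemma sqr_edist_le x y z :
  edist x z ^+ 2 <= 2%:R * (edist x y ^+ 2 + edist y z ^+ 2).
Proof.
rewrite !sqr_edist -big_split mulr_sumr /=; apply: ler_sum => i _.
have -> : x 0 i - z 0 i = (x 0 i - y 0 i) + (y 0 i - z 0 i) by ring.
set u := x 0 i - y 0 i; set w := y 0 i - z 0 i.
have : 0 <= (u - w) ^+ 2 by rewrite sqr_ge0.
rewrite !expr2 => uw; nra.
Qed.

Lemma edist_le_2max x y z :
  edist x z <= 2%:R * Num.max (edist x y) (edist y z).
Proof.
have := sqr_edist_le x y z; have := edist_ge0 x y; have := edist_ge0 y z.
set a := edist x y; set b := edist y z; set c := edist x z.
set m := Num.max a b; rewrite !expr2 => b0 a0 hc.
have am : a <= m by rewrite le_max lexx.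
have bm : b <= m by rewrite le_max lexx orbT.
rewrite leNgt; apply/negP => hm.
have : 2%:R * m * (2%:R * m) < c * c by nra.
nra.
Qed.

End EuclideanDistance.

Section RedClasses.

Variables (T : finType) (col : T -> T -> bool).
Hypothesis col_sym : forall x y, x != y -> col x y = col y x.
Hypothesis red_trans : forall x y z, x != y -> y != z -> x != z ->
  ~~ col x y -> ~~ col y z -> ~~ col x z.

Definition red_or_eq x y := (x == y) || ~~ col x y.

Lemma red_or_eq_refl x : red_or_eq x x.
Proof. by rewrite /red_or_eq eqxx. Qed.

Lemma red_or_eq_sym x y : red_or_eq x y -> red_or_eq y x.
Proof.
rewrite /red_or_eq eq_sym; case: eqVneq => [//|nyx] /=.
by rewrite col_sym // eq_sym.
Qed.

Lemma red_or_eq_trans x y z : red_or_eq x y -> red_or_eq y z -> red_or_eq x z.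
Proof.
rewrite /red_or_eq.
case: (eqVneq x y) => [-> //|nxy] /= rxy.
case: (eqVneq y z) => [<- /=|nyz /= ryz]; first by rewrite rxy orbT.
by case: (eqVneq x z) => [//|nxz] /=; apply: red_trans nxy nyz nxz rxy ryz.
Qed.

Lemma red_or_eqN x y : x != y -> red_or_eq x y = ~~ col x y.
Proof. by rewrite /red_or_eq => /negbTE ->. Qed.

Definition red_class b := [set x | red_or_eq b x].

Lemma red_class_red_clique b : red_clique col (red_class b).
Proof.
move=> x y; rewrite !inE => bx b_y nxy.
by rewrite -red_or_eqN //; apply: red_or_eq_trans (red_or_eq_sym bx) b_y.
Qed.

Lemma red_class_eq b c x :
  x \in red_class b -> x \in red_class c -> red_or_eq b c.
Proof.
by rewrite !inE => bx cx; apply: red_or_eq_trans bx (red_or_eq_sym cx).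
Qed.

Lemma red_class_blue b c x y : ~~ red_or_eq b c ->
  x \in red_class b -> y \in red_class c -> col x y.
Proof.
rewrite !inE => nbc bx cy; apply: contraNT nbc => rxy.
have /(red_or_eq_trans bx) : red_or_eq x y by rewrite /red_or_eq rxy orbT.
by move/red_or_eq_trans; apply; apply: red_or_eq_sym.
Qed.

Variable B : {set T}.

Lemma blue_clique_red_or_eq : blue_clique col B ->
  {in B &, forall b c, red_or_eq b c -> b = c}.
Proof.
move=> Bblue b c bB cB; rewrite /red_or_eq.
by case: eqVneq => [//|nbc]; rewrite Bblue.
Qed.

Lemma red_classI_blue_clique b : blue_clique col B -> b \in B ->
  red_class b :&: B = [set b].
Proof.
move=> Bblue bB; apply/setP => x; rewrite !inE.
apply/andP/eqP => [[bx xB] | ->]; last by rewrite red_or_eq_refl.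
exact/esym/(blue_clique_red_or_eq Bblue).
Qed.

Lemma largest_blue_clique_cover x : largest_blue_clique col B ->
  exists2 b, b \in B & x \in red_class b.
Proof.
case=> Bblue Bmax; case: (boolP [exists b in B, red_or_eq b x]).
  by case/exists_inP => b bB bx; exists b; rewrite ?inE.
move/exists_inPn => blue_xB.
have xNB : x \notin B by apply: contraTN (red_or_eq_refl x) => /blue_xB.
suff /Bmax : blue_clique col (x |: B) by rewrite cardsU1 xNB ltnn.
have blue_x b : b \in B -> col b x.
  by move=> bB; have := blue_xB b bB; rewrite negb_or negbK => /andP[].
move=> u v; rewrite !inE => /predU1P[->|uB] /predU1P[->|vB] nuv.
- by rewrite eqxx in nuv.
- by rewrite col_sym // blue_x.
- exact: blue_x.
- exact: Bblue.
Qed.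

Lemma largest_blue_clique_red_partition : largest_blue_clique col B ->
  exists P : 'I_#|B| -> {set T},
    [/\ (forall i j, i != j -> [disjoint P i & P j]),
        (forall x, exists i, x \in P i),
        (forall i, red_clique col (P i)),
        (forall i, #|P i :&: B| = 1%N) &
        (forall i j p q, i != j -> p \in P i -> q \in P j -> col p q)].
Proof.
move=> hB; have [Bblue _] := hB.
have class_inj := blue_clique_red_or_eq Bblue.
have ij_neq (i j : 'I_#|B|) : i != j -> ~~ red_or_eq (enum_val i) (enum_val j).
  apply: contra => /class_inj eq_ij; apply/eqP/enum_val_inj.
  by apply: eq_ij; apply: enum_valP.
exists (fun i => red_class (enum_val i)); split.
- move=> i j /ij_neq nij; apply/pred0P => x /=.
  by apply/andP => -[xi xj]; move: nij; rewrite (red_class_eq xi xj).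
- move=> x; have [b bB bx] := largest_blue_clique_cover x hB.
  by exists (enum_rank_in bB b); rewrite enum_rankK_in.
- by move=> i; apply: red_class_red_clique.
- by move=> i; rewrite red_classI_blue_clique ?cards1 ?enum_valP.
- by move=> i j p q /ij_neq; apply: red_class_blue.
Qed.

End RedClasses.

Theorem lemma1 (R : rcfType) (d : nat) (T : finType) (pos : T -> 'rV[R]_d)
  (pos_inj : injective pos) (col : T -> T -> bool)
  (col_sym : forall x y, x != y -> col x y = col y x)
  (col_sep : forall p1 p2 q1 q2, p1 != p2 -> q1 != q2 ->
      col p1 p2 -> ~~ col q1 q2 ->
      3%:R * edist (pos q1) (pos q2) < edist (pos p1) (pos p2))
  (B : {set T}) (hB : largest_blue_clique col B) :
  exists P : 'I_#|B| -> {set T},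
    [/\ (forall i j, i != j -> [disjoint P i & P j]),
        (forall x, exists i, x \in P i),
        (forall i, red_clique col (P i)),
        (forall i, #|P i :&: B| = 1%N) &
        (forall i j p q, i != j -> p \in P i -> q \in P j -> col p q)].
Proof.
have red_trans x y z : x != y -> y != z -> x != z ->
    ~~ col x y -> ~~ col y z -> ~~ col x z.
  move=> nxy nyz nxz rxy ryz; apply/negP => bxz.
  have := col_sep _ _ _ _ nxz nxy bxz rxy; have := col_sep _ _ _ _ nxz nyz bxz ryz.
  have := edist_le_2max (pos x) (pos y) (pos z).
  have := edist_ge0 (pos x) (pos y).
  by case: (leP (edist (pos x) (pos y)) (edist (pos y) (pos z))) => _; lra.
exact: largest_blue_clique_red_partition col_sym red_trans B hB.
Qed.
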